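(* Let $N\ge 2$ and let $\theta_1,\dots,\theta_N\in\mathbb R$. Consider the $N$-qubit state $|e_{\theta_1}\rangle\otimes\cdots\otimes|e_{\theta_N}\rangle$, where $|e_\theta\rangle=(|0\rangle+e^{i\theta}|1\rangle)/\sqrt2$. Apply, for each $j=2,\dots,N$, a CNOT gate with qubit $1$ as control and qubit $j$ as target, and then measure each qubit $j=2,\dots,N$ in the computational basis, obtaining outcomes $m_j\in\{0,1\}$. Then the outcomes $m_2,\dots,m_N$ are independent and uniformly distributed, and conditional on them the first qubit is left (up to a global phase) in the state $|e_{\theta_{\rm tot}}\rangle$ with $\theta_{\rm tot}=\theta_1+\sum_{j=2}^N(-1)^{m_j}\theta_j$. In particular, if $\theta_1=\cdots=\theta_N=\theta$ and exactly $k$ of the outcomes equal $0$, the first qubit is left in $|e_{(2k+2-N)\theta}\rangle$, which occurs with probability $2^{-(N-1)}\binom{N-1}{k}$, and the average quantum Fisher information about $\theta$ of the resulting single-qubit state, $\sum_{k=0}^{N-1}2^{-(N-1)}\binom{N-1}{k}(2k+2-N)^2$, equals $N$, the quantum Fisher information of $|e_\theta\rangle^{\otimes N}$.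
   Context: The CNOT gate acts as $|a\rangle|b\rangle\mapsto|a\rangle|a\oplus b\rangle$ for $a,b\in\{0,1\}$. For a differentiable family of pure states $|\phi_\theta\rangle$, the quantum Fisher information is $F(|\phi_\theta\rangle)=4\left(\langle\partial_\theta\phi_\theta|\partial_\theta\phi_\theta\rangle-|\langle\phi_\theta|\partial_\theta\phi_\theta\rangle|^2\right)$; for $|e_{c\theta}\rangle$ it equals $c^2$. *)

From HB Require Import structures.
From mathcomp Require Import all_boot all_order all_algebra.
From mathcomp Require Import complex.
From mathcomp Require Import all_classical all_reals all_analysis.

Set Implicit Arguments.
Unset Strict Implicit.
Unset Printing Implicit Defensive.
Import Order.TTheory GRing.Theory Num.Theory.
Local Open Scope ring_scope.

Section Qubits.
Variable R : realType.
Local Notation C := R[i].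

Definition sqmod (z : C) : R := complex.Re z ^+ 2 + complex.Im z ^+ 2.

Definition expi (t : R) : C := Complex (cos t) (sin t).

Definition e_ket (t : R) : bool -> C :=
  fun b => (if b then expi t else 1) / Complex (Num.sqrt 2) 0.

(* An (n+1)-qubit register: qubit 1 of the paper is ord0, qubit j+2 of the
   paper (j < n) is lift ord0 j.  Computational basis = {ffun 'I_n.+1 -> bool}. *)
Definition basis n := {ffun 'I_n.+1 -> bool}.

Definition prod_state n (th : 'I_n.+1 -> R) : basis n -> C :=
  fun x => \prod_(j < n.+1) e_ket (th j) (x j).

(* action of a gate permuting basis states: U |x> = |f x> *)
Definition apply_basis_gate n (f : basis n -> basis n) (psi : basis n -> C)
  : basis n -> C :=
  fun y => \sum_(x : basis n | f x == y) psi x.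

Definition cnot n (c t : 'I_n.+1) (x : basis n) : basis n :=
  [ffun j => if j == t then x c (+) x t else x j].

Definition after_cnots n (psi : basis n -> C) : basis n -> C :=
  foldl (fun phi (j : 'I_n) => apply_basis_gate (cnot ord0 (lift ord0 j)) phi)
        psi (enum 'I_n).

Definition join n (a : bool) (m : {ffun 'I_n -> bool}) : basis n :=
  [ffun j => if unlift ord0 j is Some i then m i else a].

Definition prob n (psi : basis n -> C) (m : {ffun 'I_n -> bool}) : R :=
  \sum_(a : bool) sqmod (psi (join a m)).

Definition post n (psi : basis n -> C) (m : {ffun 'I_n -> bool}) : bool -> C :=
  fun a => psi (join a m) / Complex (Num.sqrt (prob psi m)) 0.

Definition theta_tot n (th : 'I_n.+1 -> R) (m : {ffun 'I_n -> bool}) : R :=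
  th ord0 + \sum_(i < n) (-1) ^+ (m i) * th (lift ord0 i).

Definition nzeros n (m : {ffun 'I_n -> bool}) : nat := #|[set i | ~~ m i]|.

Definition eq_up_to_phase (u v : bool -> C) : Prop :=
  exists c : C, sqmod c = 1 /\ forall a, u a = c * v a.

Definition dstate (I : finType) (phi : R -> I -> C) (t : R) : I -> C :=
  fun i => Complex (derive1 (fun s => complex.Re (phi s i)) t)
                   (derive1 (fun s => complex.Im (phi s i)) t).

Definition QFI (I : finType) (phi : R -> I -> C) (t : R) : R :=
  4 * (\sum_i sqmod (dstate phi t i)
       - sqmod (\sum_i conjc (phi t i) * dstate phi t i)).

End Qubits.

From Pilot Require Import Defs.
From HB Require Import structures.
From mathcomp Require Import all_boot all_order all_algebra.
From mathcomp Require Import complex.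
From mathcomp Require Import all_classical all_reals all_analysis.
From mathcomp Require Import ring.

(* After the fan of CNOTs controlled by qubit 1, the basis state
   |a, m> carries the amplitude of |a, m xor a> in the product state, namely
   2^(-N/2) e^(i phi) with phi = a th_1 + sum_j (m_j xor a) th_j.  All these
   amplitudes have the same modulus, so every outcome m has probability
   2 * 2^(-N); and the phases for a = 1 and a = 0 differ by
   th_1 + sum_j (-1)^(m_j) th_j, which leaves qubit 1 in |e_(theta_tot)>.
   For a family of states with amplitudes r_x e^(i c_x s) the quantum Fisher
   information is 4 times the variance of c under the weights r_x^2; this gives
   c^2 for |e_(c s)> and, with c_x the number of ones of x, N for the product
   state.  The remaining averages are the first two moments of the binomial
   distribution, computed by induction through Pascal's rule. *)

Set Implicit Arguments.
Unset Strict Implicit.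
Unset Printing Implicit Defensive.
Import Order.TTheory GRing.Theory Num.Theory.
Local Open Scope ring_scope.

Section Polar.
Variable R : realType.

Definition polar (a r : R) : R[i] := Complex (r * cos a) (r * sin a).

Lemma polarD (a b r p : R) : polar a r * polar b p = polar (a + b) (r * p).
Proof. by rewrite /polar cosD sinD; congr Complex; ring. Qed.

Lemma polar01 : polar 0 1 = 1.
Proof. by rewrite /polar cos0 sin0 !mulr1 mulr0. Qed.

Lemma prod_polar (I : finType) (a r : I -> R) :
  \prod_i polar (a i) (r i) = polar (\sum_i a i) (\prod_i r i).
Proof.
apply: (big_rec3 (fun x y z => x = polar y z)) => [|i x y z _ ->];
  by rewrite ?polar01 ?polarD.
Qed.

Lemma sqmod_polar (a r : R) : sqmod (polar a r) = r ^+ 2.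
Proof. by rewrite /sqmod /= -[RHS]mulr1 -(cos2Dsin2 a); ring. Qed.

Lemma polar_divr (a r s : R) : polar a r / (s%:C)%C = polar a (r / s).
Proof. by rewrite -fmorphV /polar; congr Complex; ring. Qed.

Lemma invsqrt2_sqr : (Num.sqrt 2)^-1 ^+ 2 = 2^-1 :> R.
Proof. by rewrite exprVn sqr_sqrtr ?ler0n. Qed.

Lemma e_ketE (t : R) (b : bool) : e_ket t b = polar (b%:R * t) (Num.sqrt 2)^-1.
Proof.
rewrite /e_ket complexr0.
have -> : (if b then expi t else 1) = polar (b%:R * t) 1.
  by case: b; rewrite ?mul1r ?mul0r ?polar01 // /polar !mul1r.
by rewrite polar_divr div1r.
Qed.

End Polar.

Section PhaseFamilies.
Variable R : realType.

Lemma is_derive_scale (c t : R) : is_derive t 1 (fun s => c * s) c.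
Proof. by apply: is_derive_eq; exact: mulr1. Qed.

Lemma derive1_cos_scale (c r t : R) :
  derive1 (fun s => r * cos (c * s)) t = - (r * c * sin (c * t)).
Proof.
have h := is_deriveZ r (is_derive1_comp (is_derive_cos (c * t)) (is_derive_scale c t)).
by rewrite derive1E (@derive_val _ _ _ _ _ _ _ h) /GRing.scale /=; ring.
Qed.

Lemma derive1_sin_scale (c r t : R) :
  derive1 (fun s => r * sin (c * s)) t = r * c * cos (c * t).
Proof.
have h := is_deriveZ r (is_derive1_comp (is_derive_sin (c * t)) (is_derive_scale c t)).
by rewrite derive1E (@derive_val _ _ _ _ _ _ _ h) /GRing.scale /=; ring.
Qed.

Lemma dstate_polar (I : finType) (c r : I -> R) (t : R) (i : I) :
  dstate (fun s i => polar (c i * s) (r i)) t i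
  = Complex (- (r i * c i * sin (c i * t))) (r i * c i * cos (c i * t)).
Proof. by rewrite /dstate /= derive1_cos_scale derive1_sin_scale. Qed.

Lemma QFI_polar (I : finType) (c r : I -> R) (t : R) :
  QFI (fun s i => polar (c i * s) (r i)) t
  = 4 * (\sum_i r i ^+ 2 * c i ^+ 2 - (\sum_i r i ^+ 2 * c i) ^+ 2).
Proof.
rewrite /QFI; congr (_ * (_ - _)).
  apply: eq_bigr => i _; rewrite dstate_polar /sqmod /=.
  by rewrite -[RHS]mulr1 -(cos2Dsin2 (c i * t)); ring.
rewrite (eq_bigr (fun i => (r i ^+ 2 * c i)%:C * 'i)%C); last first.
  move=> i _; rewrite dstate_polar -[r i ^+ 2 * c i]mulr1.
  by rewrite -[in X in (X%:C)%C](cos2Dsin2 (c i * t)); congr Complex; ring.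
by rewrite -mulr_suml -rmorph_sum /sqmod /=; ring.
Qed.

Lemma QFI_e_ket (c t : R) : QFI (fun s => e_ket (c * s)) t = c ^+ 2.
Proof.
have -> : (fun s => e_ket (c * s)) = fun s b => polar ((b%:R * c) * s) (Num.sqrt 2)^-1.
  by apply/funext => s; apply/funext => b; rewrite e_ketE mulrA.
by rewrite QFI_polar !big_bool /= invsqrt2_sqr; field.
Qed.

End PhaseFamilies.

Section BinomialMoments.
Variable R : numFieldType.

Lemma sum_binomialS n (f : nat -> R) :
  \sum_(k < n.+2) 'C(n.+1, k)%:R * f k = \sum_(k < n.+1) 'C(n, k)%:R * (f k + f k.+1).
Proof.
rewrite -(big_mkord xpredT (fun k => 'C(n.+1, k)%:R * f k)).
rewrite -(big_mkord xpredT (fun k => 'C(n, k)%:R * (f k + f k.+1))).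
rewrite big_nat_recl // bin0; under eq_bigr do rewrite binS natrD mulrDl.
rewrite big_split /=; under [RHS]eq_bigr do rewrite mulrDr.
rewrite [RHS]big_split /= [X in _ = X + _]big_nat_recl // bin0.
rewrite [X in _ + (X + _) = _]big_nat_recr //= bin_small // mul0r addr0.
by rewrite addrA.
Qed.

Lemma sum_binomial_quadratic n (a b c : R) :
  \sum_(k < n.+1) 'C(n, k)%:R * (a + b * k%:R + c * k%:R ^+ 2)
  = 2 ^+ n * (a + b * n%:R / 2 + c * n%:R * n.+1%:R / 4).
Proof.
elim: n a b c => [|n IH] a b c; first by rewrite big_ord1 bin0 /=; field.
rewrite (sum_binomialS n (fun k => a + b * k%:R + c * k%:R ^+ 2)).
rewrite (eq_bigr (fun k : 'I_n.+1 => 'C(n, k)%:R *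
  ((2 * a + b + c) + (2 * b + 2 * c) * k%:R + (2 * c) * k%:R ^+ 2))).
  by rewrite IH exprS !mulrS; field.
by move=> k _; rewrite mulrS; ring.
Qed.

Lemma sum_binomial_mul n : \sum_(k < n.+1) 'C(n, k)%:R * k%:R = 2 ^+ n * n%:R / 2 :> R.
Proof.
rewrite (eq_bigr (fun k : 'I_n.+1 => 'C(n, k)%:R * (0 + 1 * k%:R + 0 * k%:R ^+ 2))).
  by rewrite sum_binomial_quadratic; field.
by move=> k _; ring.
Qed.

Lemma sum_binomial_mul_sqr n :
  \sum_(k < n.+1) 'C(n, k)%:R * k%:R ^+ 2 = 2 ^+ n * (n%:R * n.+1%:R) / 4 :> R.
Proof.
rewrite (eq_bigr (fun k : 'I_n.+1 => 'C(n, k)%:R * (0 + 0 * k%:R + 1 * k%:R ^+ 2))).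
  by rewrite sum_binomial_quadratic; field.
by move=> k _; ring.
Qed.

Lemma sum_binomial_sqr_affine n :
  \sum_(k < n.+1) 'C(n, k)%:R / 2 ^+ n * ((2 * k + 2)%:R - n.+1%:R) ^+ 2
  = n.+1%:R :> R.
Proof.
rewrite (eq_bigr (fun k : 'I_n.+1 => (2 ^+ n)^-1 * ('C(n, k)%:R *
  ((1 - n%:R) ^+ 2 + 4 * (1 - n%:R) * k%:R + 4 * k%:R ^+ 2)))).
  by rewrite -mulr_sumr sum_binomial_quadratic; field; rewrite expf_neq0 // pnatr_eq0.
by move=> k _; rewrite natrD natrM mulrS; ring.
Qed.

End BinomialMoments.

Lemma natr_sum_bool (R : pzSemiRingType) (I : finType) (P : pred I) :
  \sum_i (P i)%:R = #|[set i | P i]|%:R :> R.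
Proof.
rewrite -sum1dep_card natr_sum [RHS]big_mkcond /=.
by apply: eq_bigr => i _; case: (P i).
Qed.

Section BooleanFunctions.
Variables (N : nat) (b : bool).

Lemma card_ffun_count k :
  #|[set m : {ffun 'I_N -> bool} | #|[set i | m i == b]| == k]| = 'C(N, k).
Proof.
pose S (m : {ffun 'I_N -> bool}) := [set i | m i == b].
pose T (A : {set 'I_N}) := [ffun i => (i \in A) == b].
have TS : cancel T S.
  by move=> A; apply/setP => i; rewrite !inE ffunE; case: b; case: (i \in A).
have ST : cancel S T.
  by move=> m; apply/ffunP => i; rewrite ffunE inE; case: b; case: (m i).
rewrite -[in RHS](card_ord N) -card_draws -(card_imset _ (can_inj TS)).
by rewrite (can2_imset_pre _ TS ST); apply: eq_card => m; rewrite !inE.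
Qed.

Lemma sum_ffun_count (R : pzSemiRingType) (F : nat -> R) :
  \sum_(m : {ffun 'I_N -> bool}) F #|[set i | m i == b]|
  = \sum_(k < N.+1) 'C(N, k)%:R * F k.
Proof.
pose c (m : {ffun 'I_N -> bool}) : 'I_N.+1 := inord #|[set i | m i == b]|.
have cE m : (c m : nat) = #|[set i | m i == b]|.
  by rewrite inordK // ltnS -[X in (_ <= X)%N](card_ord N) max_card.
rewrite (partition_big c predT) //=; apply: eq_bigr => k _.
rewrite (eq_bigr (fun _ => F k)); last by move=> m /eqP <-; rewrite cE.
rewrite sumr_const -(card_ffun_count k) mulr_natl; congr (_ *+ _).
by apply: eq_card => m; rewrite inE -cE.
Qed.

End BooleanFunctions.

Section Circuit.
Variables (R : realType) (n : nat).

Lemma apply_basis_gate_can (f g : Defs.basis n -> Defs.basis n)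
    (psi : Defs.basis n -> R[i]) y :
  cancel f g -> cancel g f -> apply_basis_gate f psi y = psi (g y).
Proof.
move=> fK gK; apply: big_pred1 => x /=.
by apply/eqP/eqP => [<-|->].
Qed.

Lemma cnotK (c t : 'I_n.+1) : c != t -> involutive (cnot c t).
Proof.
move=> ct x; apply/ffunP => j; rewrite !ffunE (negbTE ct) eqxx addKb.
by case: eqP => [->|].
Qed.

Lemma join0 a (m : {ffun 'I_n -> bool}) : join a m ord0 = a.
Proof. by rewrite ffunE unlift_none. Qed.

Lemma join_lift a (m : {ffun 'I_n -> bool}) i : join a m (lift ord0 i) = m i.
Proof. by rewrite ffunE liftK. Qed.

Lemma cnot_join a (m : {ffun 'I_n -> bool}) j :
  cnot ord0 (lift ord0 j) (join a m) = join a [ffun i => m i (+) ((i == j) && a)].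
Proof.
apply/ffunP => k; rewrite ffunE; case: (unliftP ord0 k) => [i ->|->].
  rewrite (inj_eq lift_inj) !join_lift join0 ffunE.
  by case: eqP => [->|] /=; rewrite ?addbF // addbC.
by rewrite (negbTE (neq_lift _ _)) !join0.
Qed.

Definition cnot_fan (x : Defs.basis n) : Defs.basis n :=
  foldr (fun j => cnot ord0 (lift ord0 j)) x (enum 'I_n).

Lemma after_cnotsE (psi : Defs.basis n -> R[i]) y :
  after_cnots psi y = psi (cnot_fan y).
Proof.
rewrite /after_cnots /cnot_fan; elim: (enum 'I_n) psi => [|j l IH] psi //=.
by rewrite IH (apply_basis_gate_can _ _ (cnotK (neq_lift _ _)) (cnotK (neq_lift _ _))).
Qed.

Lemma cnot_fan_join a (m : {ffun 'I_n -> bool}) :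
  cnot_fan (join a m) = join a [ffun i => m i (+) a].
Proof.
have fold_join (l : seq 'I_n) : uniq l ->
    foldr (fun j => cnot ord0 (lift ord0 j)) (join a m) l
    = join a [ffun i => m i (+) ((i \in l) && a)].
  elim: l => [_|j l IH /= /andP[jl /IH ->]].
    by congr join; apply/ffunP => i; rewrite !ffunE addbF.
  rewrite cnot_join; congr join; apply/ffunP => i; rewrite !ffunE in_cons.
  by case: eqP => [->|]; rewrite ?(negbTE jl) ?addbF //= addbC.
rewrite /cnot_fan fold_join ?enum_uniq //; congr join.
by apply/ffunP => i; rewrite !ffunE mem_enum.
Qed.

End Circuit.

Section Measurement.
Variables (R : realType) (n : nat) (th : 'I_n.+1 -> R).

Lemma prod_stateE (x : Defs.basis n) :
  prod_state th x = polar (\sum_j (x j)%:R * th j) ((Num.sqrt 2)^-1 ^+ n.+1).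
Proof.
rewrite /prod_state; under eq_bigr do rewrite e_ketE.
by rewrite prod_polar prodr_const card_ord.
Qed.

Definition fan_phase (a : bool) (m : {ffun 'I_n -> bool}) : R :=
  a%:R * th ord0 + \sum_(i < n) (m i (+) a)%:R * th (lift ord0 i).

Lemma after_cnots_join a m :
  after_cnots (prod_state th) (join a m)
  = polar (fan_phase a m) ((Num.sqrt 2)^-1 ^+ n.+1).
Proof.
rewrite after_cnotsE cnot_fan_join prod_stateE big_ord_recl join0 /fan_phase.
by congr (polar (_ + _) _); apply: eq_bigr => i _; rewrite join_lift ffunE.
Qed.

Lemma fan_phase_true m : fan_phase true m = fan_phase false m + theta_tot th m.
Proof.
rewrite /fan_phase /theta_tot (eq_bigr (fun i =>
  (m i (+) false)%:R * th (lift ord0 i) + (-1) ^+ m i * th (lift ord0 i))).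
  by rewrite big_split /=; ring.
by move=> i _; case: (m i); rewrite /=; ring.
Qed.

Lemma prob_after_cnots m : prob (after_cnots (prod_state th)) m = 1 / 2 ^+ n.
Proof.
rewrite /prob big_bool /= !after_cnots_join !sqmod_polar -exprM mulnC exprM.
rewrite invsqrt2_sqr exprS exprVn; field.
by rewrite expf_neq0 // pnatr_eq0.
Qed.

Lemma post_after_cnots m :
  eq_up_to_phase (post (after_cnots (prod_state th)) m) (e_ket (theta_tot th m)).
Proof.
exists (polar (fan_phase false m) 1); split => [|a]; first by rewrite sqmod_polar expr1n.
rewrite /post after_cnots_join prob_after_cnots e_ketE polarD !mul1r.
rewrite complexr0 polar_divr; congr polar; first by case: a; rewrite ?fan_phase_true /=; ring.
have -> : Num.sqrt (2 ^- n) = (Num.sqrt 2)^-1 ^+ n :> R.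
  by rewrite -exprVn -invsqrt2_sqr -exprM mulnC exprM sqrtr_sqr ger0_norm.
by rewrite exprS mulfK // expf_neq0 // invr_eq0 sqrtr_eq0 -ltNge ltr0n.
Qed.

End Measurement.

Section EqualPhases.
Variables (R : realType) (n : nat).

Lemma theta_tot_const (t : R) (m : {ffun 'I_n -> bool}) :
  theta_tot (fun _ => t) m = ((2 * nzeros m + 2)%:R - n.+1%:R) * t.
Proof.
have sgE i : (-1) ^+ m i = 2 * (~~ m i)%:R - 1 :> R by case: (m i) => /=; ring.
rewrite /theta_tot -mulr_suml (eq_bigr _ (fun i _ => sgE i)) sumrB -mulr_sumr.
rewrite natr_sum_bool -[#|[set i | ~~ m i]|]/(nzeros m) sumr_const card_ord.
by rewrite natrD natrM mulrS; ring.
Qed.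

Lemma card_nzeros k : #|[set m : {ffun 'I_n -> bool} | nzeros m == k]| = 'C(n, k).
Proof.
rewrite -(card_ffun_count n false k); apply: eq_card => m; rewrite !inE /nzeros.
by congr (_ == k); apply: eq_card => i; rewrite !inE eqbF_neg.
Qed.

Lemma QFI_prod_state_const (t : R) :
  QFI (fun s => prod_state (fun _ : 'I_n.+1 => s)) t = n.+1%:R.
Proof.
have -> : (fun s : R => prod_state (fun _ : 'I_n.+1 => s))
    = fun s (x : Defs.basis n) =>
        polar (#|[set j | x j == true]|%:R * s) ((Num.sqrt 2)^-1 ^+ n.+1).
  apply/funext => s; apply/funext => x; rewrite prod_stateE -mulr_suml natr_sum_bool.
  by congr (polar (_%:R * _) _); apply: eq_card => j; rewrite !inE eqb_id.
rewrite QFI_polar -!mulr_sumr.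
rewrite (sum_ffun_count _ _ (fun k => k%:R ^+ 2)) (sum_ffun_count _ _ (fun k => k%:R)).
rewrite sum_binomial_mul_sqr sum_binomial_mul -exprM mulnC exprM invsqrt2_sqr exprVn.
by field; rewrite expf_neq0 // pnatr_eq0.
Qed.

End EqualPhases.

Theorem mainTheorem2 (R : realType) (n : nat) (hn : (1 <= n)%N)
    (th : 'I_n.+1 -> R) :
  let psi := after_cnots (prod_state th) in
  (* outcomes m_2..m_N independent and uniform: joint law uniform *)
  (forall m : {ffun 'I_n -> bool}, prob psi m = 1 / 2 ^+ n) /\
  (* post-measurement state of qubit 1 is |e_{theta_tot}> up to global phase *)
  (forall m : {ffun 'I_n -> bool},
      eq_up_to_phase (post psi m) (e_ket (theta_tot th m))) /\
  (* the special case theta_1 = ... = theta_N = t *)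
  (forall t : R,
     let psit := after_cnots (prod_state (fun _ : 'I_n.+1 => t)) in
     let ck (k : nat) : R := (2 * k + 2)%:R - (n.+1)%:R in
     (forall (k : nat) (m : {ffun 'I_n -> bool}), nzeros m = k ->
        eq_up_to_phase (post psit m) (e_ket (ck k * t))) /\
     (forall k : nat,
        \sum_(m : {ffun 'I_n -> bool} | nzeros m == k) prob psit m
          = 'C(n, k)%:R / 2 ^+ n) /\
     \sum_(k < n.+1) ('C(n, k)%:R / 2 ^+ n) * QFI (fun s => e_ket (ck k * s)) t
       = \sum_(k < n.+1) ('C(n, k)%:R / 2 ^+ n) * (ck k) ^+ 2 /\
     \sum_(k < n.+1) ('C(n, k)%:R / 2 ^+ n) * (ck k) ^+ 2 = (n.+1)%:R /\
     QFI (fun s => prod_state (fun _ : 'I_n.+1 => s)) t = (n.+1)%:R).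
Proof.
move=> psi; split; first exact: prob_after_cnots.
split; first exact: post_after_cnots.
move=> t psit ck; split.
  by move=> k m <-; rewrite -theta_tot_const; exact: post_after_cnots.
split.
  move=> k; under eq_bigr do rewrite prob_after_cnots.
  by rewrite sumr_const -cardsE card_nzeros -[LHS]mulr_natl mul1r.
split; first by apply: eq_bigr => k _; rewrite QFI_e_ket.
split; [exact: sum_binomial_sqr_affine | exact: QFI_prod_state_const].
Qed.
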